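(* Let $t\ge1$ be a power of two and $0\le k\le t$. Then $\mathrm{val}(\mathcal{F}[t,k])\le \dfrac{k^2\log(2t)}{t}$ (logarithm base 2).
   Context: An interval is a nonempty set $\{a,\ldots,b\}$ of integers; a $[t,k]$-interval system is a set of $k$ pairwise disjoint intervals in $[t]$. $\mathrm{val}(F)=\sum_{I\in F}1/|I|$ and for a distribution $\mathcal{F}$ over interval systems $\mathrm{val}(\mathcal{F})=\mathbb{E}_{F\sim\mathcal{F}}\mathrm{val}(F)$. For an interval $[a,b]$ and integer $c$, $[a,b]+c=[a+c,b+c]$, and $F+c=\{I+c:I\in F\}$. $\mathcal{F}[t,k]$ is the output distribution of the recursive randomized procedure $\mathrm{Sample}(t,k)$ ($0\le k\le t$): if $k=0$ return $\emptyset$; if $k=1$ return $\{[t]\}$; otherwise let $s=\lceil t/2\rceil$, sample $j\in\{0,\ldots,k\}$ with probability $\binom{s}{j}\binom{t-s}{k-j}/\binom{t}{k}$, compute $F_1=\mathrm{Sample}(s,j)$ and $F_2=\mathrm{Sample}(t-s,k-j)$ independently, and return $F_1\cup(F_2+s)$. *)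

From mathcomp Require Import all_boot all_order all_algebra.
From mathcomp Require Import reals exp.
Set Implicit Arguments. Unset Strict Implicit. Unset Printing Implicit Defensive.
Import Order.TTheory GRing.Theory Num.Theory.
Local Open Scope ring_scope.

(* An interval {a,...,b} (a <= b) of integers is represented by the pair (a, b).
   An interval system is a list of intervals. *)
Definition interval := (nat * nat)%type.
Definition isystem := seq interval.

Definition ilen (I : interval) : nat := (I.2 - I.1).+1.

Definition ishift (c : nat) (I : interval) : interval := (I.1 + c, I.2 + c)%N.
Definition sshift (c : nat) (F : isystem) : isystem := map (ishift c) F.

Definition val (R : realType) (F : isystem) : R :=
  \sum_(I <- F) ((ilen I)%:R)^-1.

(* A finite distribution over interval systems: a list of (probability, outcome)
   pairs.  Expected value of val: *)
Definition dist (R : realType) := seq (R * isystem)%type.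
Definition val_dist (R : realType) (D : dist R) : R :=
  \sum_(pF <- D) pF.1 * val R pF.2.

(* Sample(t,k), computed as an explicit output distribution.  [fuel] only
   guarantees termination: each recursive call strictly decreases t when
   t >= 2, so fuel = t suffices for every reachable call. *)
Fixpoint sample_aux (R : realType) (fuel t k : nat) : dist R :=
  match fuel with
  | 0 => [::]
  | fuel'.+1 =>
    if k == 0%N then [:: (1, [::])]
    else if k == 1%N then [:: (1, [:: (1%N, t)])]
    else
      let s := uphalf t in
      flatten
        [seq [seq (('C(s, j) * 'C(t - s, k - j))%:R / ('C(t, k))%:R * p1.1 * p2.1,
                   p1.2 ++ sshift s p2.2)
             | p1 <- sample_aux R fuel' s j, p2 <- sample_aux R fuel' (t - s) (k - j)]
        | j <- iota 0 k.+1]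
  end.

Definition sampleF (R : realType) (t k : nat) : dist R := sample_aux R t t k.

Definition log2 (R : realType) (x : R) : R := ln x / ln 2.

(* We prove the sharper estimate, for s = 2^m,
       val(F[s,k]) <= bound_m(k) := [k = 1]/s + m k(k-1)/(s-1),
   by induction along the recursion of Sample.  For k >= 2 a draw of
   Sample(2s,k) is the union of independent draws of Sample(s,j) and
   Sample(s,k-j) (the second one shifted), j hypergeometric, and val is additive
   over such a union.  Since every output distribution has total mass at most 1,
   the expected value is at most E_j [bound_m(j) + bound_m(k-j)] = 2 E_j bound_m(j)
   by the symmetry j <-> k-j.  Two Vandermonde-type identities evaluate this
   average in closed form, and the estimate C(s,k-1) <= s C(2s-2,k-2) shows that
   it is at most bound_{m+1}(k).  Finally bound_n(k) <= k^2 (n+1)/2^n, which is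
   the theorem because log2(2 * 2^n) = n + 1. *)
From Pilot Require Import Defs.
From mathcomp Require Import zify.
From mathcomp Require Import all_boot all_order all_algebra.
From mathcomp Require Import ring.
From mathcomp Require Import reals exp.
Import Order.TTheory GRing.Theory Num.Theory.
Local Open Scope ring_scope.

Section NatFacts.
Local Open Scope nat_scope.

Lemma bin_mul_falling2 a j :
  'C(a, j.+2) * (j.+2 * j.+1) = a * a.-1 * 'C(a.-2, j).
Proof.
rewrite mulnA [_ * j.+2]mulnC -mul_bin_diag -mulnA [_ * j.+1]mulnC.
by rewrite -mul_bin_diag mulnA.
Qed.

Lemma convolution_at1 a b k :
  \sum_(j < k.+3) 'C(a, j) * 'C(b, k.+2 - j) * (nat_of_ord j == 1) = a * 'C(b, k.+1).
Proof.
rewrite big_ord_recl big_ord_recl big1 /=; last by move=> i _; rewrite muln0.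
by rewrite /bump /= bin1 muln0 add0n !muln1 addn0.
Qed.

Lemma convolution_falling2 a b k :
  \sum_(j < k.+3) 'C(a, j) * 'C(b, k.+2 - j) * (j * j.-1) =
  a * a.-1 * 'C(a.-2 + b, k).
Proof.
rewrite big_ord_recl big_ord_recl /= !muln0 !add0n.
rewrite -binomial.Vandermonde big_distrr /=; apply: eq_bigr => i _.
by rewrite /bump /= !add1n subSS mulnAC bin_mul_falling2 mulnA.
Qed.

Lemma bin_le_double s k : 0 < s -> 'C(s, k.+1) <= s * 'C((s * 2).-2, k).
Proof.
move=> s_gt0; apply: (@leq_trans (k.+1 * 'C(s, k.+1))); first by rewrite leq_pmull.
by rewrite -mul_bin_diag leq_mul2l leq_bin2l ?orbT //; lia.
Qed.

Lemma uphalf_le t : uphalf t <= t.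
Proof. by rewrite leq_uphalf_double -mul2n leq_pmull. Qed.

Lemma uphalf_pow2 m : uphalf (2 ^ m.+1) = 2 ^ m.
Proof. by rewrite expnS mul2n uphalf_double. Qed.

Lemma pow2S_sub m : 2 ^ m.+1 - 2 ^ m = 2 ^ m.
Proof. by rewrite expnS mul2n -addnn addnK. Qed.

Lemma pow2_pred_gt0 m : 0 < (2 ^ m.+1).-1.
Proof. by rewrite -ltnS prednK ?expn_gt0 // -[1]/(2 ^ 0) ltn_exp2l. Qed.

(* The recurrence inequality after clearing denominators, with s = 2^m. *)
Lemma bound_step_nat m k :
  2 * ('C(2 ^ m, k.+1) + m * 2 ^ m * 'C((2 ^ m).-2 + 2 ^ m, k)) * (2 ^ m.+1).-1
  <= m.+1 * (k.+2 * k.+1) * 'C(2 ^ m.+1, k.+2).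
Proof.
set s := 2 ^ m.
have s_gt0 : 0 < s by rewrite expn_gt0.
have pow_double : 2 ^ m.+1 = s * 2 by rewrite expnS mulnC.
have binS := bin_mul_falling2 (2 ^ m.+1) k.
rewrite pow_double in binS *; set Z := 'C((s * 2).-2, k) in binS *.
have le_first : 'C(s, k.+1) <= s * Z by apply: bin_le_double.
have le_second : m * s * 'C(s.-2 + s, k) <= m * s * Z.
  have [->|m_gt0] := posnP m; first by rewrite !mul0n.
  have s_ge2 : 2 <= s by rewrite /s -{1}(expn1 2) leq_exp2l.
  by rewrite /Z (_ : s.-2 + s = (s * 2).-2) //; lia.
have le_c : 2 * ('C(s, k.+1) + m * s * 'C(s.-2 + s, k)) <= m.+1 * (s * 2) * Z.
  by nia.
rewrite (_ : m.+1 * (k.+2 * k.+1) * 'C(s * 2, k.+2) =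
             m.+1 * (s * 2) * Z * (s * 2).-1); last first.
  by rewrite -mulnA [X in m.+1 * X]mulnC binS; ring.
by rewrite leq_mul2r le_c orbT.
Qed.

(* bound_n(k) <= k^2 (n+1)/2^n after clearing denominators, k >= 2. *)
Lemma bound_final_nat n k t : k.+2 <= t ->
  n * (k.+2 * k.+1) * t <= k.+2 ^ 2 * n.+1 * t.-1.
Proof.
case: t => // t k_le /=.
have step : k.+1 * t.+1 <= k.+2 * t by rewrite mulnS (mulSn k.+1) leq_add2r.
apply: (@leq_trans (n * k.+2 * (k.+2 * t))).
  rewrite (_ : n * _ * t.+1 = n * k.+2 * (k.+1 * t.+1)); last by ring.
  by rewrite leq_mul2l step orbT.
rewrite (_ : n * k.+2 * (k.+2 * t) = k.+2 ^ 2 * n * t); last by ring.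
by rewrite leq_mul2r leq_mul2l leqnSn !orbT.
Qed.

End NatFacts.

Section Distributions.
Variable R : realType.

Definition mass (D : dist R) : R := \sum_(p <- D) p.1.

Lemma val_cat_shift F1 c F2 :
  Defs.val R (F1 ++ sshift c F2) = Defs.val R F1 + Defs.val R F2.
Proof.
rewrite /Defs.val big_cat /= /sshift big_map; congr (_ + _).
by apply: eq_bigr => I _; rewrite /ilen /ishift /= subnDr.
Qed.

Definition split_weight t k j : R :=
  ('C(uphalf t, j) * 'C(t - uphalf t, k - j))%:R / ('C(t, k))%:R.

Lemma split_weight_ge0 t k j : 0 <= split_weight t k j.
Proof. by rewrite /split_weight divr_ge0 // ler0n. Qed.

(* The split weights sum to 1 (or to 0 when C(t,k) = 0), by Vandermonde. *)
Lemma sum_split_weight_le1 t k : \sum_(j < k.+1) split_weight t k j <= 1.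
Proof.
rewrite /split_weight -big_distrl /= -natr_sum.
rewrite binomial.Vandermonde subnKC ?uphalf_le //.
have [->|Ck_neq0] := eqVneq ('C(t, k)%:R : R) 0; first by rewrite invr0 mulr0.
by rewrite divff ?Ck_neq0.
Qed.

Lemma sum_pairs_additive (A B : dist R) (w : R) (f : isystem -> R) :
  \sum_(p1 <- A) \sum_(p2 <- B) w * p1.1 * p2.1 * (f p1.2 + f p2.2) =
  w * ((\sum_(p <- A) p.1 * f p.2) * mass B + mass A * (\sum_(p <- B) p.1 * f p.2)).
Proof.
rewrite mulrDr !big_distrl !big_distrr -big_split /=; apply: eq_bigr => p1 _.
rewrite !mulrA !big_distrr -big_split /=; apply: eq_bigr => p2 _; ring.
Qed.

Notation left_part fuel t j := (sample_aux R fuel (uphalf t) j).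
Notation right_part fuel t k j := (sample_aux R fuel (t - uphalf t) (k - j)).

Lemma sample_aux_split fuel t k : sample_aux R fuel.+1 t k.+2 =
  flatten [seq [seq (split_weight t k.+2 j * p1.1 * p2.1, p1.2 ++ sshift (uphalf t) p2.2)
               | p1 <- left_part fuel t j, p2 <- right_part fuel t k.+2 j]
          | j <- iota 0 k.+3].
Proof. by []. Qed.

Lemma val_dist_step fuel t k :
  val_dist (sample_aux R fuel.+1 t k.+2) =
  \sum_(j < k.+3) split_weight t k.+2 j *
     (val_dist (left_part fuel t j) * mass (right_part fuel t k.+2 j)
      + mass (left_part fuel t j) * val_dist (right_part fuel t k.+2 j)).
Proof.
rewrite /val_dist sample_aux_split big_flatten big_map.
rewrite -[iota 0 k.+3]/(index_iota 0 k.+3) big_mkord.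
apply: eq_bigr => j _; rewrite big_allpairs_dep /=.
under eq_bigr do under eq_bigr do rewrite val_cat_shift.
exact: sum_pairs_additive.
Qed.

Lemma mass_step fuel t k :
  mass (sample_aux R fuel.+1 t k.+2) =
  \sum_(j < k.+3) split_weight t k.+2 j *
     (mass (left_part fuel t j) * mass (right_part fuel t k.+2 j)).
Proof.
rewrite /mass sample_aux_split big_flatten big_map.
rewrite -[iota 0 k.+3]/(index_iota 0 k.+3) big_mkord.
apply: eq_bigr => j _; rewrite big_allpairs_dep /= big_distrl big_distrr /=.
apply: eq_bigr => p1 _; rewrite big_distrr /= big_distrr /=.
by apply: eq_bigr => p2 _; ring.
Qed.

Lemma sample_aux_bounds fuel t k :
  (0 <= mass (sample_aux R fuel t k) <= 1) /\ 0 <= val_dist (sample_aux R fuel t k).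
Proof.
elim: fuel t k => [|fuel IH] t k.
  by rewrite /mass /val_dist /= !big_nil lexx ler01.
case: k => [|[|k]].
- by rewrite /mass /val_dist /= !big_seq1 /Defs.val big_nil mulr0 ler01 lexx.
- rewrite /mass /val_dist /= !big_seq1 /Defs.val big_seq1 mul1r /=.
  by rewrite ler01 lexx invr_ge0 ler0n.
have parts j := (IH (uphalf t) j, IH (t - uphalf t)%N (k.+2 - j)%N).
split; last first.
  rewrite val_dist_step; apply: sumr_ge0 => j _.
  have [[/andP[m1 _] v1] [/andP[m2 _] v2]] := parts j.
  by rewrite mulr_ge0 ?split_weight_ge0 // addr_ge0 // mulr_ge0.
rewrite mass_step; apply/andP; split.
  apply: sumr_ge0 => j _; have [[/andP[m1 _] _] [/andP[m2 _] _]] := parts j.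
  by rewrite mulr_ge0 ?split_weight_ge0 // mulr_ge0.
apply: le_trans (sum_split_weight_le1 t k.+2); apply: ler_sum => j _.
have [[/andP[m1 m1'] _] [/andP[m2 m2'] _]] := parts j.
by apply: ler_piMr; rewrite ?split_weight_ge0 ?mulr_ile1.
Qed.

End Distributions.

Section Bound.
Variable R : realType.

Definition sample_bound (m k : nat) : R :=
  (k == 1%N)%:R / (2 ^ m)%:R + (m * (k * k.-1))%:R / ((2 ^ m).-1)%:R.

Lemma sample_bound_ge0 m k : 0 <= sample_bound m k.
Proof. by rewrite /sample_bound addr_ge0 // divr_ge0 // ler0n. Qed.

Lemma convolution_reverse s k (F : nat -> R) :
  \sum_(j < k.+3) ('C(s, j) * 'C(s, k.+2 - j))%:R * F (k.+2 - j)%N =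
  \sum_(j < k.+3) ('C(s, j) * 'C(s, k.+2 - j))%:R * F j.
Proof.
rewrite (reindex_inj rev_ord_inj) /=; apply: eq_bigr => j _.
have j_le : (j <= k.+2)%N by rewrite -ltnS.
by rewrite subSS subKn // mulnC.
Qed.

Lemma convolution_bound m k :
  \sum_(j < k.+3) ('C(2 ^ m, j) * 'C(2 ^ m, k.+2 - j))%:R * sample_bound m j =
  ('C(2 ^ m, k.+1) + m * 2 ^ m * 'C((2 ^ m).-2 + 2 ^ m, k))%:R.
Proof.
rewrite /sample_bound.
under eq_bigr do rewrite mulrDr !mulrA -!natrM.
rewrite big_split /= -!big_distrl /= -!natr_sum convolution_at1.
rewrite (eq_bigr (fun i : 'I_k.+3 =>
   m * ('C(2 ^ m, i) * 'C(2 ^ m, k.+2 - i) * (i * i.-1)))%N); last first.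
  by move=> i _; rewrite mulnCA.
rewrite -big_distrr /= convolution_falling2.
have pow_gt0 : (0 < 2 ^ m)%N by rewrite expn_gt0.
rewrite natrM mulrAC divff ?mul1r ?pnatr_eq0 -?lt0n // natrD; congr (_ + _).
rewrite (_ : (m * (2 ^ m * (2 ^ m).-1 * 'C((2 ^ m).-2 + 2 ^ m, k)) =
   (m * 2 ^ m * 'C((2 ^ m).-2 + 2 ^ m, k)) * (2 ^ m).-1)%N); last by ring.
case: m pow_gt0 => [|m] _; first by rewrite !mul0n mul0r.
by rewrite natrM mulfK // pnatr_eq0 -lt0n pow2_pred_gt0.
Qed.

Lemma bound_step m k :
  \sum_(j < k.+3) split_weight R (2 ^ m.+1) k.+2 j *
     (sample_bound m j + sample_bound m (k.+2 - j)) <= sample_bound m.+1 k.+2.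
Proof.
rewrite /split_weight uphalf_pow2 pow2S_sub.
under eq_bigr do rewrite mulrAC.
rewrite -big_distrl /=.
under eq_bigr do rewrite mulrDr.
rewrite big_split /= convolution_reverse convolution_bound.
have [->|C_gt0] := posnP 'C(2 ^ m.+1, k.+2).
  by rewrite invr0 mulr0 sample_bound_ge0.
have pred_gt0 := pow2_pred_gt0 m.
rewrite /sample_bound /= mul0r add0r ler_pdivrMr ?ltr0n //.
rewrite mulrAC ler_pdivlMr ?ltr0n // -natrD -!natrM ler_nat.
by rewrite addnn -mul2n bound_step_nat.
Qed.

Lemma val_sample_le_bound fuel m k :
  val_dist (sample_aux R fuel (2 ^ m) k) <= sample_bound m k.
Proof.
elim: fuel m k => [|fuel IH] m k.
  by rewrite /val_dist /= big_nil sample_bound_ge0.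
case: k => [|[|k]].
- by rewrite /val_dist /= big_seq1 /Defs.val big_nil mulr0 sample_bound_ge0.
- rewrite /val_dist /= big_seq1 /Defs.val big_seq1 mul1r /sample_bound /=.
  by rewrite !muln0 mul0r addr0 mul1r /ilen /= subn1 prednK ?expn_gt0.
rewrite val_dist_step.
case: m => [|m].
  rewrite big1 ?sample_bound_ge0 // => j _.
  by rewrite /split_weight (@bin_small (2 ^ 0) k.+2) // invr0 mulr0 mul0r.
apply: le_trans (bound_step m k); apply: ler_sum => j _.
rewrite uphalf_pow2 pow2S_sub ler_wpM2l ?split_weight_ge0 //.
have [/andP[m1 m1'] v1] := sample_aux_bounds R fuel (2 ^ m) j.
have [/andP[m2 m2'] v2] := sample_aux_bounds R fuel (2 ^ m) (k.+2 - j)%N.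
apply: lerD.
  by apply: le_trans (IH m j); apply: ler_piMr.
by apply: le_trans (IH m (k.+2 - j)%N); apply: ler_piMl.
Qed.

Lemma sample_bound_le n k : (k <= 2 ^ n)%N ->
  sample_bound n k <= (k ^ 2)%:R * n.+1%:R / (2 ^ n)%:R.
Proof.
have pow_gt0 : (0 < 2 ^ n)%N by rewrite expn_gt0.
rewrite /sample_bound; case: k => [|[|k]] k_le.
- by rewrite /= !muln0 mul0r add0r mul0r divr_ge0 // mulr_ge0.
- rewrite eqxx /= !muln0 mul0r addr0 exp1n !mul1r.
  by rewrite -[X in X <= _]mul1r ler_wpM2r ?invr_ge0 ?ler0n // ler1n.
have pred_gt0 : (0 < (2 ^ n).-1)%N by rewrite -ltnS prednK // (leq_trans _ k_le).
rewrite /= mul0r add0r ler_pdivrMr ?ltr0n // mulrAC ler_pdivlMr ?ltr0n //.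
by rewrite -!natrM ler_nat bound_final_nat.
Qed.

End Bound.

Lemma log2_double_pow2 (R : realType) n : log2 (2 * (2 ^ n)%:R : R) = n.+1%:R.
Proof.
have ln2_gt0 : (0 : R) < ln 2 by apply: ln_gt0; rewrite ltr1n.
rewrite /log2 natrX -exprS lnXn // -(mulr_natr (ln _)) mulrAC divff ?mul1r //.
by rewrite gt_eqF.
Qed.

Theorem mainTheorem13 (R : realType) (n k : nat) (hk : (k <= 2 ^ n)%N) :
  val_dist (sampleF R (2 ^ n) k)
    <= (k ^ 2)%:R * log2 (2 * (2 ^ n)%:R : R) / (2 ^ n)%:R.
Proof.
rewrite log2_double_pow2.
apply: le_trans (val_sample_le_bound R (2 ^ n) n k) _.
exact: sample_bound_le.
Qed.
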